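(* Fix integers $1\le N_c\le N_f$, Zipf exponent $\delta>0$ with $p_f=f^{-\delta}/\sum_{n=1}^{N_f}n^{-\delta}$, and parameters $\alpha>2$, integer $M_1\ge1$, $B_{12}>0$, $W>0$, $R_0\ge0$; put $\gamma_0=2^{R_0/W}-1$. For $\lambda_{12}>0$, $P_{12}>0$ let $\mathsf C_1=\mathsf C_1(\lambda_{12},P_{12})=\lambda_{12}(P_{12}B_{12})^{2/\alpha}\,{}_2F_1[-\tfrac2\alpha,M_1;1-\tfrac2\alpha;-\tfrac{\gamma_0}{M_1B_{12}}]$ and let $\mathbf q^*=(q^*_f)_f$ be the maximizer of $\sum_{f=1}^{N_f}\frac{p_fq_f}{\mathsf C_1+q_f}$ over $\{\mathbf q\in[0,1]^{N_f}:\sum_fq_f\le N_c\}$, i.e. $q^*_f=\big[\frac{\sqrt{\mathsf C_1}}{\sqrt\nu}\sqrt{p_f}-\mathsf C_1\big]_0^1$ with $\nu>0$ such that $\sum_fq^*_f=N_c$. Then $q^*_f-q^*_{f+1}$ increases with $\lambda_{12}$ and with $P_{12}$: if $(\lambda_{12},P_{12})$ and $(\lambda'_{12},P'_{12})$ satisfy $\lambda_{12}\le\lambda'_{12}$, $P_{12}\le P'_{12}$ with at least one inequality strict, and $f\in\{1,\dots,N_f-1\}$ is such that $q^*_f,q^*_{f+1}\in(0,1)$ under both parameter choices, then $q^*_f-q^*_{f+1}$ is strictly larger under $(\lambda'_{12},P'_{12})$ than under $(\lambda_{12},P_{12})$.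
   Context: $[x]_0^1=\max\{\min\{x,1\},0\}$; ${}_2F_1$ is the Gauss hypergeometric function. $\lambda_{12}=\lambda_1/\lambda_2$ and $P_{12}=P_1/P_2$ are the macro-to-helper density and transmit power ratios, $B_{12}$ the bias ratio, $M_1$ the number of macro BS antennas. The objective is the helper-tier success probability in the low-user-density regime (each helper serves at most one user and helper activity probability tends to 0), and $\mathbf q^*$ is the optimal helper caching probability vector. *)

From Stdlib Require Import Reals Lra Lia.
From Coquelicot Require Import Coquelicot.
Open Scope R_scope.

Fixpoint poch (x : R) (n : nat) : R :=
  match n with
  | O => 1
  | S k => poch x k * (x + INR k)
  end.

(* Gauss hypergeometric series, convergent for |z| < 1. *)
Definition gauss_series (a b c z : R) : R :=
  Series (fun n => poch a n * poch b n / (poch c n * INR (Stdlib.Arith.Factorial.fact n)) * z ^ n).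

(* For 0 < z < 1 it is the Gauss series; for z <= 0 we use the
   analytic continuation given by Pfaff's transformation
     2F1(a,b;c;z) = (1-z)^(-b) 2F1(c-a,b;c;z/(z-1)),
   where z/(z-1) lies in [0,1) so the series converges. *)
Definition hyp2F1 (a b c z : R) : R :=
  if Rle_dec z 0 then Rpower (1 - z) (- b) * gauss_series (c - a) b c (z / (z - 1))
  else gauss_series a b c z.

Fixpoint sum1 (n : nat) (g : nat -> R) : R :=
  match n with
  | O => 0
  | S k => sum1 k g + g (S k)
  end.

Definition zipf (Nf : nat) (delta : R) (f : nat) : R :=
  Rpower (INR f) (- delta) / sum1 Nf (fun n => Rpower (INR n) (- delta)).

Definition gamma0 (R0 W : R) : R := Rpower 2 (R0 / W) - 1.

Definition C1_macro (alpha : R) (M1 : nat) (B12 W R0 lam12 P12 : R) : R :=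
  lam12 * Rpower (P12 * B12) (2 / alpha)
  * hyp2F1 (- (2 / alpha)) (INR M1) (1 - 2 / alpha)
           (- (gamma0 R0 W / (INR M1 * B12))).

Definition feasible (Nf Nc : nat) (q : nat -> R) : Prop :=
  (forall f, (1 <= f <= Nf)%nat -> 0 <= q f <= 1) /\ sum1 Nf q <= INR Nc.

Definition objective (Nf : nat) (p : nat -> R) (C : R) (q : nat -> R) : R :=
  sum1 Nf (fun f => p f * q f / (C + q f)).

Definition is_opt_cache (Nf Nc : nat) (p : nat -> R) (C : R) (q : nat -> R) : Prop :=
  feasible Nf Nc q /\
  forall q', feasible Nf Nc q' -> objective Nf p C q' <= objective Nf p C q.

From Stdlib Require Import Reals Lra Lia.
From Coquelicot Require Import Coquelicot.
Open Scope R_scope.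

(* Shifting a small amount of cache from file g to file h cannot improve an optimum, so
   files strictly inside (0,1) are balanced: p_h (C + q_g)^2 = p_g (C + q_h)^2.  Hence
   the level C + q_f of interior files scales like sqrt p_f, and
   q_f - q_(f+1) = (C + q_f) (1 - sqrt (p_(f+1) / p_f)).  This level rises strictly
   with C, and C_1 is strictly
   increasing in lambda_12 and P_12 because its hypergeometric factor is positive. *)

Lemma sum1_ext n F G : (forall k, (1 <= k <= n)%nat -> F k = G k) -> sum1 n F = sum1 n G.
Proof.
  induction n as [|n IH]; intros H; simpl; [reflexivity|].
  rewrite IH, (H (S n)) by (try intros; try apply H; lia); reflexivity.
Qed.

Lemma sum1_le n F G : (forall k, (1 <= k <= n)%nat -> F k <= G k) -> sum1 n F <= sum1 n G.
Proof.
  induction n as [|n IH]; intros H; simpl; [lra|].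
  assert (sum1 n F <= sum1 n G) by (apply IH; intros; apply H; lia).
  assert (F (S n) <= G (S n)) by (apply H; lia).
  lra.
Qed.

Lemma sum1_lt n F G a : (forall k, (1 <= k <= n)%nat -> F k <= G k) -> (1 <= a <= n)%nat ->
  F a < G a -> sum1 n F < sum1 n G.
Proof.
  induction n as [|n IH]; intros H Ha Hlt; [lia|]; simpl.
  assert (HS : F (S n) <= G (S n)) by (apply H; lia).
  destruct (Nat.eq_dec a (S n)) as [->|Hne].
  - assert (sum1 n F <= sum1 n G) by (apply sum1_le; intros; apply H; lia). lra.
  - assert (sum1 n F < sum1 n G) by (apply IH; [intros; apply H; lia|lia|exact Hlt]). lra.
Qed.

Lemma sum1_pos n F : (1 <= n)%nat -> (forall k, (1 <= k <= n)%nat -> 0 < F k) -> 0 < sum1 n F.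
Proof.
  induction n as [|n IH]; intros Hn H; [lia|]; simpl.
  assert (0 < F (S n)) by (apply H; lia).
  destruct n as [|n]; [simpl; lra|].
  assert (0 < sum1 (S n) F) by (apply IH; [lia|intros; apply H; lia]).
  lra.
Qed.

Definition bump (q : nat -> R) (h : nat) (e : R) (k : nat) : R :=
  if Nat.eqb k h then q h + e else q k.

Lemma bump_at q h e : bump q h e h = q h + e.
Proof. unfold bump; rewrite Nat.eqb_refl; reflexivity. Qed.

Lemma bump_other q h e k : k <> h -> bump q h e k = q k.
Proof. intros Hk; unfold bump; destruct (Nat.eqb_spec k h); [lia|reflexivity]. Qed.

Lemma sum1_bump n (G : nat -> R -> R) q h e : (1 <= h <= n)%nat ->
  sum1 n (fun k => G k (bump q h e k))
  = sum1 n (fun k => G k (q k)) + (G h (q h + e) - G h (q h)).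
Proof.
  induction n as [|n IH]; intros Hh; [lia|]; simpl.
  destruct (Nat.eq_dec h (S n)) as [->|Hne].
  - rewrite bump_at, (sum1_ext n _ (fun k => G k (q k))); [lra|].
    intros k Hk; rewrite bump_other by lia; reflexivity.
  - rewrite IH, bump_other by lia; lra.
Qed.

Lemma sum1_bump_total n q h e : (1 <= h <= n)%nat -> sum1 n (bump q h e) = sum1 n q + e.
Proof.
  intros Hh; change (sum1 n (fun k => bump q h e k) = sum1 n (fun k => q k) + e).
  rewrite (sum1_bump n (fun _ x => x) q h e Hh); ring.
Qed.

Lemma objective_bump Nf p C q h e : (1 <= h <= Nf)%nat ->
  objective Nf p C (bump q h e)
  = objective Nf p C q + (p h * (q h + e) / (C + (q h + e)) - p h * q h / (C + q h)).
Proof. apply (sum1_bump Nf (fun k x => p k * x / (C + x))). Qed.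

Lemma feasible_bump Nf Nc q h e : feasible Nf Nc q -> (1 <= h <= Nf)%nat ->
  0 <= q h + e <= 1 -> sum1 Nf q + e <= INR Nc -> feasible Nf Nc (bump q h e).
Proof.
  intros [Hb Hs] Hh He Hsum; split.
  - intros k Hk; destruct (Nat.eq_dec k h) as [->|Hne];
      [rewrite bump_at | rewrite bump_other by exact Hne; apply Hb]; assumption.
  - rewrite sum1_bump_total by exact Hh; exact Hsum.
Qed.

Lemma gain_up_pos p C x e : 0 < p -> 0 < C -> 0 <= x -> 0 < e ->
  0 < p * (x + e) / (C + (x + e)) - p * x / (C + x).
Proof.
  intros Hp HC Hx He.
  replace (p * (x + e) / (C + (x + e)) - p * x / (C + x))
    with (p * C * e / ((C + x + e) * (C + x))) by (field; lra).
  apply Rdiv_lt_0_compat; [apply Rmult_lt_0_compat; [nra|lra] | nra].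
Qed.

Lemma gain_transfer_pos pg ph C x y e : 0 < C -> 0 <= y -> 0 < e <= x ->
  e * (ph * (C + x) + pg * (C + y)) < ph * (C + x) ^ 2 - pg * (C + y) ^ 2 ->
  0 < (pg * (x + - e) / (C + (x + - e)) - pg * x / (C + x))
      + (ph * (y + e) / (C + (y + e)) - ph * y / (C + y)).
Proof.
  intros HC Hy He HD.
  replace ((pg * (x + - e) / (C + (x + - e)) - pg * x / (C + x))
           + (ph * (y + e) / (C + (y + e)) - ph * y / (C + y)))
    with (C * e * ((ph * (C + x) ^ 2 - pg * (C + y) ^ 2) - e * (ph * (C + x) + pg * (C + y)))
          / ((C + x - e) * (C + x) * (C + y + e) * (C + y)))
    by (field; repeat split; lra).
  apply Rdiv_lt_0_compat.
  - apply Rmult_lt_0_compat; [nra|lra].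
  - repeat apply Rmult_lt_0_compat; lra.
Qed.

(* Balance makes [u1 / u = v1 / v], so the gaps [u - u1] and [v - v1] scale with [u] and [v]. *)
Lemma gap_lt_of_balance pa pb u u1 v v1 : 0 < pb < pa -> 0 < u -> 0 < u1 -> 0 < v1 ->
  u < v -> pb * u ^ 2 = pa * u1 ^ 2 -> pb * v ^ 2 = pa * v1 ^ 2 -> u - u1 < v - v1.
Proof.
  intros Hp Hu Hu1 Hv1 Huv Eu Ev.
  assert (Hlt : u1 < u).
  { assert (pa * u1 ^ 2 < pa * u ^ 2)
      by (rewrite <- Eu; apply Rmult_lt_compat_r; [apply pow_lt|]; lra).
    assert (u1 ^ 2 < u ^ 2) by (apply Rmult_lt_reg_l with pa; lra).
    nra. }
  assert (Hsq : (u1 * v) ^ 2 = (v1 * u) ^ 2).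
  { apply Rmult_eq_reg_l with pa; [|lra].
    replace (pa * (u1 * v) ^ 2) with ((pa * u1 ^ 2) * v ^ 2) by ring.
    replace (pa * (v1 * u) ^ 2) with ((pa * v1 ^ 2) * u ^ 2) by ring.
    rewrite <- Eu, <- Ev; ring. }
  assert (Hcross : u1 * v = v1 * u).
  { assert (0 < u1 * v) by (apply Rmult_lt_0_compat; lra).
    assert (0 < v1 * u) by (apply Rmult_lt_0_compat; lra).
    nra. }
  apply Rmult_lt_reg_l with u; [lra|].
  replace (u * (v - v1)) with (v * (u - u1)) by nra.
  apply Rmult_lt_compat_r; lra.
Qed.

Section Optimal_cache.

Variables (Nf Nc : nat) (p : nat -> R).
Hypothesis hp : forall k, (1 <= k <= Nf)%nat -> 0 < p k.

Section Fixed_cost.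

Variables (C : R) (q : nat -> R).
Hypotheses (hC : 0 < C) (hq : is_opt_cache Nf Nc p C q).

Lemma opt_budget_tight h : (1 <= h <= Nf)%nat -> q h < 1 -> sum1 Nf q = INR Nc.
Proof.
  intros Hh Hqh; destruct hq as [[Hb Hs] Hopt].
  destruct (Rle_lt_dec (INR Nc) (sum1 Nf q)) as [|Hlt]; [lra|exfalso].
  set (e := Rmin (1 - q h) (INR Nc - sum1 Nf q)).
  assert (He : 0 < e) by (apply Rmin_pos; lra).
  assert (He1 : e <= 1 - q h) by apply Rmin_l.
  assert (He2 : e <= INR Nc - sum1 Nf q) by apply Rmin_r.
  assert (Hbh := Hb h Hh).
  assert (Hfeas : feasible Nf Nc (bump q h e))
    by (apply feasible_bump; [split; assumption | exact Hh | lra | lra]).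
  specialize (Hopt _ Hfeas); rewrite objective_bump in Hopt by exact Hh.
  pose proof (gain_up_pos (p h) C (q h) e (hp h Hh) hC (proj1 Hbh) He).
  lra.
Qed.

Lemma opt_exchange g h : (1 <= g <= Nf)%nat -> (1 <= h <= Nf)%nat -> g <> h ->
  0 < q g -> q h < 1 -> p h * (C + q g) ^ 2 <= p g * (C + q h) ^ 2.
Proof.
  intros Hg Hh Hgh Hqg Hqh; destruct hq as [[Hb Hs] Hopt].
  destruct (Rle_lt_dec (p h * (C + q g) ^ 2) (p g * (C + q h) ^ 2)) as [|HD];
    [assumption|exfalso].
  assert (Hpg := hp g Hg); assert (Hph := hp h Hh).
  assert (Hbg := Hb g Hg); assert (Hbh := Hb h Hh).
  set (D := p h * (C + q g) ^ 2 - p g * (C + q h) ^ 2).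
  assert (HDpos : 0 < D) by (unfold D; lra).
  set (K := p h * (C + q g) + p g * (C + q h)).
  assert (HK : 0 < K) by (unfold K; nra).
  set (e := Rmin (q g) (Rmin (1 - q h) (D / (2 * K)))).
  assert (He1 : e <= q g) by apply Rmin_l.
  assert (He2 : e <= 1 - q h) by (eapply Rle_trans; [apply Rmin_r|apply Rmin_l]).
  assert (He3 : e <= D / (2 * K)) by (eapply Rle_trans; [apply Rmin_r|apply Rmin_r]).
  assert (He : 0 < e).
  { apply Rmin_pos; [lra|apply Rmin_pos; [lra|apply Rdiv_lt_0_compat; lra]]. }
  assert (HeK : e * K < D).
  { apply Rle_lt_trans with (D / (2 * K) * K); [apply Rmult_le_compat_r; lra|].
    replace (D / (2 * K) * K) with (D / 2) by (field; lra). lra. }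
  set (q1 := bump q g (- e)).
  assert (Hq1h : q1 h = q h) by (apply bump_other; lia).
  assert (Hfeas1 : feasible Nf Nc q1)
    by (apply feasible_bump; [split; assumption | exact Hg | lra | lra]).
  assert (Hfeas : feasible Nf Nc (bump q1 h e)).
  { apply feasible_bump; [exact Hfeas1 | exact Hh | rewrite Hq1h; lra |].
    unfold q1; rewrite sum1_bump_total by exact Hg; lra. }
  specialize (Hopt _ Hfeas).
  rewrite objective_bump, Hq1h in Hopt by exact Hh.
  unfold q1 in Hopt; rewrite objective_bump in Hopt by exact Hg.
  pose proof (gain_transfer_pos (p g) (p h) C (q g) (q h) e hC (proj1 Hbh)
                ltac:(lra) HeK).
  lra.
Qed.

Lemma opt_interior_balance g h : (1 <= g <= Nf)%nat -> (1 <= h <= Nf)%nat -> g <> h ->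
  0 < q g < 1 -> 0 < q h < 1 -> p h * (C + q g) ^ 2 = p g * (C + q h) ^ 2.
Proof.
  intros Hg Hh Hgh Hqg Hqh.
  pose proof (opt_exchange g h Hg Hh Hgh (proj1 Hqg) (proj2 Hqh)).
  pose proof (opt_exchange h g Hh Hg (not_eq_sym Hgh) (proj1 Hqh) (proj2 Hqg)).
  lra.
Qed.

End Fixed_cost.

(* If the level [C + q_f] did not rise with [C], the exchange inequalities would force
   [q' <= q] everywhere and [q'_f < q_f], leaving budget unused at [C']. *)
Lemma opt_level_increasing C C' q q' f : 0 < C -> C < C' ->
  is_opt_cache Nf Nc p C q -> is_opt_cache Nf Nc p C' q' -> (1 <= f <= Nf)%nat ->
  0 < q f -> q' f < 1 -> C + q f < C' + q' f.
Proof.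
  intros HC HCC' hq hq' Hf Hqf Hq'f.
  assert (HC' : 0 < C') by lra.
  destruct (Rlt_le_dec (C + q f) (C' + q' f)) as [|Hge]; [assumption|exfalso].
  assert (Hdom : forall g, (1 <= g <= Nf)%nat -> q' g <= q g).
  { intros g Hg; destruct (Nat.eq_dec g f) as [->|Hne]; [lra|].
    destruct (Rle_lt_dec (q' g) (q g)) as [|Hgt]; [assumption|exfalso].
    assert (Hbg := proj1 (proj1 hq) g Hg); assert (Hbg' := proj1 (proj1 hq') g Hg).
    assert (Hbf' := proj1 (proj1 hq') f Hf).
    pose proof (opt_exchange C' q' HC' hq' g f Hg Hf Hne ltac:(lra) Hq'f).
    pose proof (opt_exchange C q HC hq f g Hf Hg (not_eq_sym Hne) Hqf ltac:(lra)).
    assert (Hpf := hp f Hf); assert (Hpg := hp g Hg).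
    assert (Hsqf : (C' + q' f) ^ 2 <= (C + q f) ^ 2) by nra.
    assert (Hsqg : (C' + q' g) ^ 2 <= (C + q g) ^ 2) by nra.
    nra. }
  assert (Hsum : sum1 Nf q' < sum1 Nf q) by (apply (sum1_lt Nf q' q f); auto; lra).
  rewrite (opt_budget_tight C' q' HC' hq' f Hf Hq'f) in Hsum.
  destruct hq as [[_ Hs] _]; lra.
Qed.

Lemma opt_gap_increasing C C' q q' f : 0 < C -> C < C' ->
  is_opt_cache Nf Nc p C q -> is_opt_cache Nf Nc p C' q' ->
  (1 <= f <= Nf - 1)%nat -> p (S f) < p f ->
  0 < q f < 1 /\ 0 < q (S f) < 1 -> 0 < q' f < 1 /\ 0 < q' (S f) < 1 ->
  q f - q (S f) < q' f - q' (S f).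
Proof.
  intros HC HCC' hq hq' Hf Hpf [Hqf HqSf] [Hq'f Hq'Sf].
  assert (Hf1 : (1 <= f <= Nf)%nat) by lia.
  assert (HfS : (1 <= S f <= Nf)%nat) by lia.
  pose proof (opt_interior_balance C q HC hq f (S f) Hf1 HfS (n_Sn f) Hqf HqSf).
  pose proof (opt_interior_balance C' q' ltac:(lra) hq' f (S f) Hf1 HfS (n_Sn f) Hq'f Hq'Sf).
  pose proof (opt_level_increasing C C' q q' f HC HCC' hq hq' Hf1
                (proj1 Hqf) (proj2 Hq'f)).
  assert (Hgap : (C + q f) - (C + q (S f)) < (C' + q' f) - (C' + q' (S f))).
  { apply (gap_lt_of_balance (p f) (p (S f))); try lra. split; [apply hp|]; assumption. }
  lra.
Qed.

End Optimal_cache.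

Lemma Rpower_pos x y : 0 < Rpower x y.
Proof. apply exp_pos. Qed.

Lemma zipf_pos Nf delta k : (1 <= Nf)%nat -> 0 < zipf Nf delta k.
Proof.
  intros HNf; apply Rdiv_lt_0_compat; [apply Rpower_pos|].
  apply sum1_pos; [exact HNf|intros; apply Rpower_pos].
Qed.

Lemma zipf_decreasing Nf delta f : (1 <= Nf)%nat -> 0 < delta -> (1 <= f)%nat ->
  zipf Nf delta (S f) < zipf Nf delta f.
Proof.
  intros HNf Hdelta Hf; unfold zipf.
  apply Rmult_lt_compat_r.
  - apply Rinv_0_lt_compat, sum1_pos; [exact HNf|intros; apply Rpower_pos].
  - rewrite !Rpower_Ropp; apply Rinv_lt_contravar.
    + apply Rmult_lt_0_compat; apply Rpower_pos.
    + apply Rlt_Rpower_l; [exact Hdelta|].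
      rewrite S_INR; split; [apply (lt_INR 0); lia|lra].
Qed.

Definition gauss_coef (a b c : R) (n : nat) : R :=
  poch a n * poch b n / (poch c n * INR (Stdlib.Arith.Factorial.fact n)).

Lemma poch_pos x n : 0 < x -> 0 < poch x n.
Proof.
  intros Hx; induction n as [|n IH]; simpl; [lra|].
  apply Rmult_lt_0_compat; [exact IH|]. pose proof (pos_INR n); lra.
Qed.

Lemma gauss_coef_pos a b c n : 0 < a -> 0 < b -> 0 < c -> 0 < gauss_coef a b c n.
Proof.
  intros Ha Hb Hc; unfold gauss_coef.
  pose proof (lt_0_INR _ (Stdlib.Arith.Factorial.lt_O_fact n)).
  apply Rdiv_lt_0_compat; apply Rmult_lt_0_compat; auto using poch_pos.
Qed.

Lemma gauss_coef_succ a b c n : 0 < a -> 0 < b -> 0 < c ->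
  gauss_coef a b c (S n)
  = gauss_coef a b c n * ((a + INR n) / (1 + INR n) * ((b + INR n) / (c + INR n))).
Proof.
  intros Ha Hb Hc; unfold gauss_coef; simpl.
  pose proof (pos_INR n); pose proof (poch_pos c n Hc).
  pose proof (lt_0_INR _ (Stdlib.Arith.Factorial.lt_O_fact n)).
  rewrite plus_INR, mult_INR; simpl; field; repeat split; nra.
Qed.

Lemma is_lim_seq_shift_ratio x y : 0 < y -> is_lim_seq (fun n => (x + INR n) / (y + INR n)) 1.
Proof.
  intros Hy.
  assert (Hden : is_lim_seq (fun n => y + INR n) p_infty).
  { eapply is_lim_seq_plus; [apply is_lim_seq_const|apply is_lim_seq_INR|reflexivity]. }
  pose proof (is_lim_seq_inv _ _ Hden ltac:(discriminate)) as Hinv; simpl in Hinv.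
  pose proof (is_lim_seq_plus' _ _ _ _ (is_lim_seq_const 1)
                (is_lim_seq_mult' _ _ _ _ (is_lim_seq_const (x - y)) Hinv)) as Hlim.
  replace (1 + (x - y) * 0) with 1 in Hlim by ring.
  eapply is_lim_seq_ext; [|exact Hlim]; intros n; simpl.
  pose proof (pos_INR n); field; lra.
Qed.

(* d'Alembert needs non-vanishing terms, so the series is first bounded at a radius [r > 0]. *)
Lemma ex_series_gauss a b c w : 0 < a -> 0 < b -> 0 < c -> 0 <= w < 1 ->
  ex_series (fun n => gauss_coef a b c n * w ^ n).
Proof.
  intros Ha Hb Hc Hw.
  set (r := (1 + w) / 2).
  assert (Hr : 0 < r < 1) by (unfold r; lra).
  assert (Hterm : forall n, 0 < gauss_coef a b c n * r ^ n).
  { intros n; apply Rmult_lt_0_compat; [apply gauss_coef_pos|apply pow_lt]; lra. }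
  assert (Hratio : is_lim_seq (fun n => Rabs (gauss_coef a b c (S n) * r ^ S n
                                              / (gauss_coef a b c n * r ^ n))) r).
  { pose proof (is_lim_seq_mult' _ _ _ _ (is_lim_seq_const r)
      (is_lim_seq_mult' _ _ _ _ (is_lim_seq_shift_ratio a 1 Rlt_0_1)
                                (is_lim_seq_shift_ratio b c Hc))) as Hlim.
    replace (r * (1 * 1)) with r in Hlim by ring.
    eapply is_lim_seq_ext; [|exact Hlim]; intros n.
    rewrite Rabs_pos_eq by (apply Rlt_le, Rdiv_lt_0_compat; apply Hterm).
    pose proof (gauss_coef_pos a b c n Ha Hb Hc); pose proof (pow_lt r n (proj1 Hr)).
    pose proof (pos_INR n).
    rewrite gauss_coef_succ by assumption; simpl; field; repeat split; lra. }
  pose proof (ex_series_DAlembert _ r (proj2 Hr) (fun n => Rgt_not_eq _ _ (Hterm n)) Hratio)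
    as Hr_ex.
  refine (@ex_series_le R_AbsRing R_CompleteNormedModule _ _ _ Hr_ex); intros n.
  change norm with Rabs; simpl.
  pose proof (gauss_coef_pos a b c n Ha Hb Hc).
  rewrite Rabs_pos_eq by (apply Rmult_le_pos; [lra|apply pow_le; lra]).
  rewrite Rabs_pos_eq by (apply Rlt_le, Hterm).
  apply Rmult_le_compat_l; [lra|apply pow_incr; unfold r; lra].
Qed.

Lemma gauss_series_ge_1 a b c w : 0 < a -> 0 < b -> 0 < c -> 0 <= w < 1 ->
  1 <= gauss_series a b c w.
Proof.
  intros Ha Hb Hc Hw; unfold gauss_series.
  change (1 <= Series (fun n => gauss_coef a b c n * w ^ n)).
  pose proof (ex_series_gauss a b c w Ha Hb Hc Hw) as Hex.
  rewrite Series_incr_1 by exact Hex.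
  assert (Hcoef0 : gauss_coef a b c 0 * w ^ 0 = 1) by (unfold gauss_coef; simpl; field).
  assert (Hzero : Series (fun _ : nat => 0) = 0).
  { rewrite (Series_ext _ (fun _ : nat => 0 * 0)) by (intros; ring).
    rewrite (Series_scal_l 0 (fun _ => 0)); ring. }
  assert (Htail : 0 <= Series (fun k => gauss_coef a b c (S k) * w ^ S k)).
  { rewrite <- Hzero; apply Series_le; [|exact (proj1 (ex_series_incr_1 _) Hex)].
    intros n; split; [lra|].
    apply Rmult_le_pos; [apply Rlt_le, gauss_coef_pos; assumption|apply pow_le; lra]. }
  lra.
Qed.

Lemma hyp2F1_pos a b c z : 0 < c - a -> 0 < b -> 0 < c -> z <= 0 -> 0 < hyp2F1 a b c z.
Proof.
  intros Hca Hb Hc Hz; unfold hyp2F1.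
  destruct (Rle_dec z 0) as [_|]; [|contradiction].
  apply Rmult_lt_0_compat; [apply Rpower_pos|].
  apply Rlt_le_trans with 1; [lra|apply gauss_series_ge_1; try assumption].
  replace (z / (z - 1)) with (1 - / (1 - z)) by (field; lra).
  assert (/ (1 - z) <= 1) by (rewrite <- Rinv_1; apply Rinv_le_contravar; lra).
  assert (0 < / (1 - z)) by (apply Rinv_0_lt_compat; lra).
  lra.
Qed.

Lemma gamma0_nonneg R0 W : 0 <= R0 -> 0 < W -> 0 <= gamma0 R0 W.
Proof.
  intros HR0 HW; unfold gamma0.
  assert (Rpower 2 0 <= Rpower 2 (R0 / W)).
  { apply Rle_Rpower; [lra|apply Rdiv_le_0_compat; lra]. }
  rewrite Rpower_O in H by lra; lra.
Qed.

Section C1_macro.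

Variables (alpha : R) (M1 : nat) (B12 W R0 : R).
Hypotheses (halpha : 2 < alpha) (hM1 : (1 <= M1)%nat) (hB : 0 < B12) (hW : 0 < W)
  (hR0 : 0 <= R0).

Lemma C1_hyp_factor_pos :
  0 < hyp2F1 (- (2 / alpha)) (INR M1) (1 - 2 / alpha) (- (gamma0 R0 W / (INR M1 * B12))).
Proof.
  assert (HM1 : 1 <= INR M1) by (apply (le_INR 1); exact hM1).
  assert (Hexp : 2 / alpha < 1) by (apply Rmult_lt_reg_r with alpha; [lra|];
                                    unfold Rdiv; rewrite Rmult_assoc, Rinv_l; lra).
  apply hyp2F1_pos; [lra|lra|lra|].
  pose proof (gamma0_nonneg R0 W hR0 hW).
  assert (0 <= gamma0 R0 W / (INR M1 * B12)) by (apply Rdiv_le_0_compat; nra).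
  lra.
Qed.

Lemma C1_macro_pos lam P : 0 < lam -> 0 < P -> 0 < C1_macro alpha M1 B12 W R0 lam P.
Proof.
  intros Hlam HP; unfold C1_macro.
  pose proof C1_hyp_factor_pos; pose proof (Rpower_pos (P * B12) (2 / alpha)).
  apply Rmult_lt_0_compat; [apply Rmult_lt_0_compat|]; assumption.
Qed.

Lemma C1_macro_lt lam P lam' P' : 0 < lam -> 0 < P -> lam <= lam' -> P <= P' ->
  lam < lam' \/ P < P' ->
  C1_macro alpha M1 B12 W R0 lam P < C1_macro alpha M1 B12 W R0 lam' P'.
Proof.
  intros Hlam HP Hle1 Hle2 Hstrict; unfold C1_macro.
  pose proof C1_hyp_factor_pos.
  assert (Hexp : 0 < 2 / alpha) by (apply Rdiv_lt_0_compat; lra).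
  set (X := Rpower (P * B12) (2 / alpha)); set (X' := Rpower (P' * B12) (2 / alpha)).
  assert (HX : 0 < X) by apply Rpower_pos.
  assert (HXX' : X <= X') by (apply Rle_Rpower_l; nra).
  assert (lam * X < lam' * X').
  { destruct Hstrict as [Hl|Hp].
    - apply Rlt_le_trans with (lam' * X); nra.
    - assert (X < X') by (apply Rlt_Rpower_l; nra). nra. }
  apply Rmult_lt_compat_r; assumption.
Qed.

End C1_macro.

Theorem corollary3 (Nc Nf : nat) (delta alpha : R) (M1 : nat) (B12 W R0 : R)
  (hNc : (1 <= Nc)%nat) (hNcf : (Nc <= Nf)%nat) (hdelta : 0 < delta)
  (halpha : 2 < alpha) (hM1 : (1 <= M1)%nat) (hB : 0 < B12) (hW : 0 < W)
  (hR0 : 0 <= R0)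
  (lam P lam' P' : R) (hlam : 0 < lam) (hP : 0 < P)
  (hlam' : 0 < lam') (hP' : 0 < P')
  (hle1 : lam <= lam') (hle2 : P <= P') (hstrict : lam < lam' \/ P < P')
  (q q' : nat -> R)
  (hq : is_opt_cache Nf Nc (zipf Nf delta) (C1_macro alpha M1 B12 W R0 lam P) q)
  (hq' : is_opt_cache Nf Nc (zipf Nf delta) (C1_macro alpha M1 B12 W R0 lam' P') q')
  (f : nat) (hf : (1 <= f <= Nf - 1)%nat)
  (hint : 0 < q f < 1 /\ 0 < q (S f) < 1)
  (hint' : 0 < q' f < 1 /\ 0 < q' (S f) < 1) :
  q f - q (S f) < q' f - q' (S f).
Proof.
  assert (hNf : (1 <= Nf)%nat) by lia.
  apply (opt_gap_increasing Nf Nc (zipf Nf delta)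
           (fun k _ => zipf_pos Nf delta k hNf)
           (C1_macro alpha M1 B12 W R0 lam P) (C1_macro alpha M1 B12 W R0 lam' P'));
    try assumption.
  - exact (C1_macro_pos alpha M1 B12 W R0 halpha hM1 hB hW hR0 lam P hlam hP).
  - exact (C1_macro_lt alpha M1 B12 W R0 halpha hM1 hB hW hR0 lam P lam' P'
             hlam hP hle1 hle2 hstrict).
  - apply zipf_decreasing; [exact hNf|exact hdelta|lia].
Qed.
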